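(* For a mutually orthogonal $d$-dimensional pure-state ensemble $\Omega=\{(p_i,|\psi_i\rangle)\}_{i=0}^{k-1}$, \[ \mathbf{C}_{\mathrm{MIO}}(\Omega)+\mathbf{S}_{\min}(\Omega)\le \log_2 d, \] where $\mathbf{S}_{\min}(\Omega)=-\log_2 p_{\max}$ with $p_{\max}=\max_i p_i$ (the min-entropy of the average state $\hat\omega=\sum_i p_i|\psi_i\rangle\langle\psi_i|$).
   Context: Incoherent states $\mathcal{I}$ are density matrices diagonal in the computational basis; MIO are channels mapping $\mathcal{I}$ into $\mathcal{I}$. Robustness of coherence: $C_R(\rho)=\min\{s\ge0:(\rho+s\tau)/(1+s)\in\mathcal{I}\text{ for some state }\tau\}$. Post-discrimination coherence: $\mathbf{C}_{\mathrm{MIO}}(\Omega)=\log_2(1+\eta)$, $\eta=\max\sum_j p_j C_R(\sigma_j)$ over MIO channels $\mathcal{N}_{A\to BA'}$ ($\dim B=k$, $A'\cong A$) with $\sigma_j=\mathrm{tr}_B[\mathcal{N}(\rho_j)]$ and $\sum_j p_j\mathrm{tr}[\mathcal{N}(\rho_j)(|j\rangle\langle j|_B\otimes I_{A'})]=P_{\mathrm{suc}}(\Omega)$, the optimal POVM discrimination probability (equal to 1 here). *)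

From HB Require Import structures.
From mathcomp Require Import all_boot all_order all_algebra.
From mathcomp Require Import complex mxtens.
From mathcomp Require Import classical_sets reals exp.

Set Implicit Arguments.
Unset Strict Implicit.
Unset Printing Implicit Defensive.

Import Order.TTheory GRing.Theory Num.Theory.
Local Open Scope ring_scope.
Local Open Scope complex_scope.

Section QuantumCoherence.
Variable R : realType.
Local Notation C := R[i].

Definition adjmx m n (A : 'M[C]_(m, n)) : 'M[C]_(n, m) := (map_mx conjc A)^T.

(* positive semidefinite: <v, A v> >= 0 for every vector v
   (in the order of the num field C, this forces the value to be real) *)
Definition psd n (A : 'M[C]_n) : Prop :=
  forall v : 'cV[C]_n, 0 <= (adjmx v *m A *m v) ord0 ord0.

Definition density n (A : 'M[C]_n) : Prop := psd A /\ \tr A = 1.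

Definition incoherent n (A : 'M[C]_n) : Prop := density A /\ is_diag_mx A.

Definition choi n m (N : 'M[C]_n -> 'M[C]_m) : 'M[C]_(n * m) :=
  \sum_(a < n) \sum_(b < n) (delta_mx a b *t N (delta_mx a b)).

Definition channel n m (N : {linear 'M[C]_n -> 'M[C]_m}) : Prop :=
  psd (choi N) /\ forall A : 'M[C]_n, \tr (N A) = \tr A.

Definition MIO n m (N : {linear 'M[C]_n -> 'M[C]_m}) : Prop :=
  channel N /\ forall A : 'M[C]_n, incoherent A -> incoherent (N A).

Definition ptrB k d (M : 'M[C]_(k * d)) : 'M[C]_d :=
  \matrix_(i < d, j < d) \sum_(b < k) M (mxtens_index (b, i)) (mxtens_index (b, j)).

Definition projB k d (j : 'I_k) : 'M[C]_(k * d) := delta_mx j j *t (1%:M : 'M[C]_d).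

Definition robustness n (rho : 'M[C]_n) : R :=
  inf [set s : R | 0 <= s /\ exists tau : 'M[C]_n, density tau /\
        incoherent (((1 + s)^-1)%:C *: (rho + s%:C *: tau))].

Definition pure_proj d (psi : 'cV[C]_d) : 'M[C]_d := psi *m adjmx psi.

Definition POVM k d (M : 'I_k -> 'M[C]_d) : Prop :=
  (forall j, psd (M j)) /\ \sum_(j < k) M j = 1%:M.

Definition Psuc k d (p : 'I_k -> R) (rho : 'I_k -> 'M[C]_d) : R :=
  sup [set x : R | exists M : 'I_k -> 'M[C]_d, POVM M /\
        x%:C = \sum_(j < k) (p j)%:C * \tr (M j *m rho j)].

Definition log2 (x : R) : R := ln x / ln 2.

Definition eta_MIO k d (p : 'I_k -> R) (rho : 'I_k -> 'M[C]_d) : R :=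
  sup [set x : R | exists N : {linear 'M[C]_d -> 'M[C]_(k * d)}, MIO N /\
        \sum_(j < k) (p j)%:C * \tr (N (rho j) *m projB d j) = (Psuc p rho)%:C /\
        x = \sum_(j < k) p j * robustness (ptrB (N (rho j)))].

Definition C_MIO k d (p : 'I_k -> R) (rho : 'I_k -> 'M[C]_d) : R :=
  log2 (1 + eta_MIO p rho).

Definition S_min k (p : 'I_k -> R) : R := - log2 (\big[Num.max/0]_(i < k) p i).

Definition orthonormal_states k d (psi : 'I_k -> 'cV[C]_d) : Prop :=
  forall i j : 'I_k, (adjmx (psi i) *m psi j) ord0 ord0 = (i == j)%:R.

End QuantumCoherence.

From HB Require Import structures.
From mathcomp Require Import all_boot all_order all_algebra.
From mathcomp Require Import complex mxtens.
From mathcomp Require Import classical_sets boolp reals exp.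
From mathcomp Require Import ring lra.
Import Order.TTheory GRing.Theory Num.Theory.
Local Open Scope ring_scope.
Local Open Scope complex_scope.

(* Discriminating orthonormal states succeeds with certainty, so an admissible
   MIO channel N sends every rho_j = |psi_j><psi_j| with p_j > 0 entirely into
   the block |j><j| (x) A', and the post-measurement state sigma_j is block j
   of N rho_j.  Since I/d is incoherent, N I is diagonal, and adding the
   positive block j of N (I - rho_j) to sigma_j gives the diagonal block j of
   N I; hence C_R(sigma_j) <= T_j - 1, where T_j is the trace of that block.
   As sum_j T_j = tr (N I) = d, the weighted robustness is at most
   p_max d - 1, i.e. 1 + eta <= p_max d, which is the claim after log2. *)

Set Implicit Arguments.
Unset Strict Implicit.
Unset Printing Implicit Defensive.

Section Positivity.
Variable R : realType.
Local Notation C := R[i].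

Lemma adjmxD m n (A B : 'M[C]_(m, n)) : adjmx (A + B) = adjmx A + adjmx B.
Proof. by apply/matrixP => i j; rewrite !mxE rmorphD. Qed.

Lemma adjmxB m n (A B : 'M[C]_(m, n)) : adjmx (A - B) = adjmx A - adjmx B.
Proof. by apply/matrixP => i j; rewrite !mxE rmorphB. Qed.

Lemma adjmxZ m n a (A : 'M[C]_(m, n)) : adjmx (a *: A) = conjc a *: adjmx A.
Proof. by apply/matrixP => i j; rewrite !mxE rmorphM. Qed.

Lemma adjmx_sum m n (I : finType) (F : I -> 'M[C]_(m, n)) :
  adjmx (\sum_i F i) = \sum_i adjmx (F i).
Proof.
by apply/matrixP => i j; rewrite !mxE !summxE rmorph_sum; apply: eq_bigr => l _; rewrite !mxE.
Qed.

Lemma adjmxK m n (A : 'M[C]_(m, n)) : adjmx (adjmx A) = A.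
Proof. by apply/matrixP => i j; rewrite !mxE conjcK. Qed.

Lemma adjmxM m n p (A : 'M[C]_(m, n)) (B : 'M[C]_(n, p)) :
  adjmx (A *m B) = adjmx B *m adjmx A.
Proof. by rewrite /adjmx map_mxM trmx_mul. Qed.

Lemma adjmx1 n : adjmx (1%:M : 'M[C]_n) = 1%:M.
Proof. by apply/matrixP => i j; rewrite !mxE eq_sym conjc_nat. Qed.

Lemma adjmx_delta m n (i : 'I_m) (j : 'I_n) :
  adjmx (delta_mx i j : 'M[C]_(m, n)) = delta_mx j i.
Proof. by apply/matrixP => a b; rewrite !mxE conjc_nat andbC. Qed.

Definition qform n (A : 'M[C]_n) (v : 'cV[C]_n) : C := (adjmx v *m A *m v) ord0 ord0.

Lemma qformE n (A : 'M[C]_n) v :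
  qform A v = \sum_i \sum_j conjc (v i ord0) * A i j * v j ord0.
Proof.
rewrite /qform mxE exchange_big; apply: eq_bigr => j _.
by rewrite mxE mulr_suml; apply: eq_bigr => i _; rewrite !mxE.
Qed.

Lemma qformD n (A B : 'M[C]_n) v : qform (A + B) v = qform A v + qform B v.
Proof. by rewrite /qform mulmxDr mulmxDl mxE. Qed.

Lemma qformZ n a (A : 'M[C]_n) v : qform (a *: A) v = a * qform A v.
Proof. by rewrite /qform -scalemxAr -scalemxAl mxE. Qed.

Lemma qform_sum n (I : finType) (F : I -> 'M[C]_n) v :
  qform (\sum_i F i) v = \sum_i qform (F i) v.
Proof. by rewrite /qform mulmx_sumr mulmx_suml summxE. Qed.

Lemma qform_delta n (A : 'M[C]_n) i j :
  ((delta_mx ord0 i : 'rV[C]_n) *m A *m (delta_mx j ord0 : 'cV[C]_n)) ord0 ord0 = A i j.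
Proof. by rewrite -rowE -colE !mxE. Qed.

Lemma psdE n (A : 'M[C]_n) : psd A = forall v, 0 <= qform A v.
Proof. by []. Qed.

Lemma psdD n (A B : 'M[C]_n) : psd A -> psd B -> psd (A + B).
Proof. by rewrite !psdE => A_psd B_psd v; rewrite qformD addr_ge0. Qed.

Lemma psdZ n a (A : 'M[C]_n) : 0 <= a -> psd A -> psd (a *: A).
Proof. by rewrite !psdE => a_ge0 A_psd v; rewrite qformZ mulr_ge0. Qed.

Lemma psd_sum n (I : finType) (F : I -> 'M[C]_n) :
  (forall i, psd (F i)) -> psd (\sum_i F i).
Proof. by rewrite psdE => F_psd v; rewrite qform_sum sumr_ge0 // => i _; apply: F_psd. Qed.

Lemma psd_gram m n (B : 'M[C]_(m, n)) : psd (adjmx B *m B).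
Proof.
move=> v; rewrite mulmxA -mulmxA -adjmxM mxE; apply: sumr_ge0 => i _.
by rewrite !mxE mulrC mulcJ_ge0.
Qed.

Lemma psd_diag n (A : 'M[C]_n) i : psd A -> 0 <= A i i.
Proof. by move=> /(_ (delta_mx i ord0)); rewrite adjmx_delta qform_delta. Qed.

Lemma psd_tr_ge0 n (A : 'M[C]_n) : psd A -> 0 <= \tr A.
Proof. by move=> A_psd; apply: sumr_ge0 => i _; apply: psd_diag. Qed.

Lemma psd_offdiag_eq0 n (A : 'M[C]_n) i j :
  psd A -> A i i = 0 -> A j j = 0 -> A i j = 0.
Proof.
move=> A_psd Aii0 Ajj0.
(* With both diagonal entries zero, the form at e_i + z e_j is the additive
   function f z below; nonnegative at both z and -z, it vanishes.  Then
   z = 1 and z = 'i isolate A i j. *)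
pose f z := z * A i j + conjc z * A j i.
have f_ge0 z : 0 <= f z.
  have := A_psd (delta_mx i ord0 + z *: delta_mx j ord0).
  rewrite adjmxD adjmxZ !adjmx_delta !(mulmxDl, mulmxDr) -!scalemxAl -!scalemxAr.
  rewrite ![((_ + _) : 'M_1) _ _]mxE ![((_ *: _) : 'M_1) _ _]mxE !qform_delta Aii0 Ajj0 /f.
  by congr (0 <= _); ring.
have f0 z : f z = 0.
  apply/le_anti; rewrite f_ge0 andbT -oppr_ge0.
  by have := f_ge0 (- z); rewrite /f rmorphN !mulNr -opprD.
have conji : conjc 'i%C = - 'i%C :> C by apply/eqP; rewrite eq_complex /= oppr0 !eqxx.
have : 'i%C * (A i j *+ 2) = 'i%C * f 1 + f 'i%C.
  by rewrite /f conji rmorph1; ring.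
rewrite !f0 mulr0 addr0 => /eqP; rewrite mulf_eq0 mulrn_eq0 /= => /orP[|/eqP //].
by rewrite eq_complex /= oner_eq0 andbF.
Qed.

Lemma psd_tr_eq0 n (A : 'M[C]_n) : psd A -> \tr A = 0 -> A = 0.
Proof.
move=> A_psd trA0.
have Aii0 i : A i i = 0.
  by apply: (@psumr_eq0P _ _ xpredT (fun i => A i i)) => // l _; apply: psd_diag.
by apply/matrixP => i j; rewrite mxE; apply: psd_offdiag_eq0.
Qed.

End Positivity.

Lemma big_mxtens (V : nmodType) m n (F : 'I_(m * n) -> V) :
  \sum_r F r = \sum_a \sum_i F (mxtens_index (a, i)).
Proof.
rewrite pair_big (reindex (@mxtens_index m n)) /=; first by apply: eq_bigr => -[].
by exists (@mxtens_unindex m n) => x _; rewrite (mxtens_indexK, mxtens_unindexK).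
Qed.

Lemma mxtens_index_inj m n (a : 'I_m) : injective (fun i : 'I_n => mxtens_index (a, i)).
Proof. by move=> i j /(congr1 (@mxtens_unindex m n)); rewrite !mxtens_indexK => -[]. Qed.

Lemma is_diag_mxZ (F : pzSemiRingType) m n (a : F) (A : 'M[F]_(m, n)) :
  is_diag_mx A -> is_diag_mx (a *: A).
Proof. by move=> /is_diag_mxP A_diag; apply/is_diag_mxP => i j ij; rewrite mxE A_diag ?mulr0. Qed.

Section Submatrices.
Variable R : realType.
Local Notation C := R[i].

Lemma psd_congr n m (A : 'M[C]_n) (B : 'M[C]_(n, m)) : psd A -> psd (adjmx B *m A *m B).
Proof. by rewrite !psdE => A_psd v; have := A_psd (B *m v); rewrite /qform adjmxM !mulmxA. Qed.

Lemma psd_mxsub n m (f : 'I_m -> 'I_n) (A : 'M[C]_n) : psd A -> psd (mxsub f f A).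
Proof.
move=> /(psd_congr (colsub f 1%:M)).
have -> : adjmx (colsub f 1%:M) = rowsub f (1%:M : 'M[C]_n).
  by apply/matrixP => i j; rewrite !mxE conjc_nat eq_sym.
by rewrite mul_rowsub_mx mulmx_colsub mul1mx mulmx1 -mxsubcr.
Qed.

Lemma is_diag_mxsub n m (f : 'I_m -> 'I_n) (A : 'M[C]_n) :
  injective f -> is_diag_mx A -> is_diag_mx (mxsub f f A).
Proof.
move=> f_inj /is_diag_mxP A_diag; apply/is_diag_mxP => i j ij.
by rewrite mxE A_diag //; apply: contra_neq ij => /val_inj/f_inj ->.
Qed.

Lemma qform_tens p q (X : 'M[C]_(p * q)) x :
  qform X x = \sum_a \sum_b \sum_c \sum_c'
    conjc (x (mxtens_index (a, c)) ord0) * X (mxtens_index (a, c)) (mxtens_index (b, c'))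
    * x (mxtens_index (b, c')) ord0.
Proof.
rewrite qformE big_mxtens; apply: eq_bigr => a _.
by under eq_bigr => c _ do rewrite big_mxtens; rewrite exchange_big.
Qed.

End Submatrices.

Section DiagonalBlocks.
Variables (R : realType) (k d : nat).
Local Notation C := R[i].
Implicit Type X : 'M[C]_(k * d).

Definition dblock X (b : 'I_k) : 'M[C]_d :=
  mxsub (fun i => mxtens_index (b, i)) (fun i => mxtens_index (b, i)) X.

Lemma dblockD X Y b : dblock (X + Y) b = dblock X b + dblock Y b.
Proof. exact: raddfD. Qed.

Lemma dblockB X Y b : dblock (X - Y) b = dblock X b - dblock Y b.
Proof. exact: raddfB. Qed.

Lemma psd_dblock X b : psd X -> psd (dblock X b).
Proof. exact: psd_mxsub. Qed.

Lemma is_diag_dblock X b : is_diag_mx X -> is_diag_mx (dblock X b).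
Proof. exact/is_diag_mxsub/mxtens_index_inj. Qed.

Lemma ptrB_dblock X : ptrB X = \sum_b dblock X b.
Proof. by apply/matrixP => i j; rewrite !mxE summxE; apply: eq_bigr => b _; rewrite mxE. Qed.

Lemma mxtrace_dblock X : \tr X = \sum_b \tr (dblock X b).
Proof.
by rewrite /mxtrace big_mxtens; apply: eq_bigr => b _; apply: eq_bigr => i _; rewrite mxE.
Qed.

Lemma mxtrace_mul_projB X j : \tr (X *m projB R d j) = \tr (dblock X j).
Proof.
have projBE b i b' i' : projB R d j (mxtens_index (b', i')) (mxtens_index (b, i)) =
    ((b' == j) && (b == j) && (i' == i))%:R.
  by rewrite /projB tensmxE !mxE -natrM mulnb.
have XPE b i : (X *m projB R d j) (mxtens_index (b, i)) (mxtens_index (b, i)) =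
    (b == j)%:R * X (mxtens_index (b, i)) (mxtens_index (j, i)).
  rewrite mxE big_mxtens (bigD1 j) //= [X in _ + X]big1 => [|b' /negbTE b'j]; last first.
    by apply: big1 => i' _; rewrite projBE b'j mulr0.
  rewrite addr0 (bigD1 i) //= [X in _ + X]big1 => [|i' /negbTE i'i]; last first.
    by rewrite projBE i'i andbF mulr0.
  by rewrite projBE !eqxx andbT addr0 mulrC.
rewrite [LHS]/mxtrace big_mxtens (bigD1 j) //= [X in _ + X]big1 => [|b /negbTE bj].
  by rewrite addr0; apply: eq_bigr => i _; rewrite XPE eqxx mul1r mxE.
by apply: big1 => i _; rewrite XPE bj mul0r.
Qed.

Lemma psd_dblock_tr0 X b : psd X -> \tr (dblock X b) = 0 -> dblock X b = 0.
Proof. by move=> /(psd_dblock b); apply: psd_tr_eq0. Qed.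

End DiagonalBlocks.

Section Choi.
Variables (R : realType) (n m : nat) (N : {linear 'M[R[i]]_n -> 'M[R[i]]_m}).

Lemma choiE a b c c' :
  choi N (mxtens_index (a, c)) (mxtens_index (b, c')) = N (delta_mx a b) c c'.
Proof.
rewrite summxE (bigD1 a) //= summxE (bigD1 b) //= tensmxE !mxE !eqxx mul1r.
rewrite !big1 ?addr0 //= => [a' a'a | b' b'b].
  by rewrite summxE big1 // => b' _; rewrite tensmxE mxE eq_sym (negbTE a'a) mul0r.
by rewrite tensmxE mxE eqxx eq_sym (negbTE b'b) mul0r.
Qed.

(* At the vector conj(v) (x) w, the quadratic form of the Choi matrix is that
   of N (v v^dagger) at w. *)
Lemma psd_choi_rank1 (v : 'cV[R[i]]_n) : psd (choi N) -> psd (N (v *m adjmx v)).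
Proof.
rewrite !psdE => CP w.
pose x : 'cV[R[i]]_(n * m) :=
  \col_r (conjc (v (mxtens_unindex r).1 ord0) * w (mxtens_unindex r).2 ord0).
have xE a c : x (mxtens_index (a, c)) ord0 = conjc (v a ord0) * w c ord0.
  by rewrite mxE mxtens_indexK.
have vvE : v *m adjmx v = \sum_a \sum_b (v a ord0 * conjc (v b ord0)) *: delta_mx a b.
  rewrite [LHS]matrix_sum_delta; apply: eq_bigr => a _; apply: eq_bigr => b _.
  by rewrite mxE big_ord1 !mxE.
suff -> : qform (N (v *m adjmx v)) w = qform (choi N) x by apply: CP.
rewrite qform_tens vvE linear_sum qform_sum; apply: eq_bigr => a _.
rewrite linear_sum qform_sum; apply: eq_bigr => b _.
rewrite linearZ qformZ qformE mulr_sumr; apply: eq_bigr => c _.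
rewrite mulr_sumr; apply: eq_bigr => c' _.
by rewrite choiE !xE rmorphM /= conjcK; ring.
Qed.

Lemma psd_choi_gram p (B : 'M[R[i]]_(p, n)) : psd (choi N) -> psd (N (adjmx B *m B)).
Proof.
move=> CP; have -> : adjmx B *m B = \sum_c adjmx (row c B) *m row c B.
  apply/matrixP => i j; rewrite !mxE summxE; apply: eq_bigr => c _.
  by rewrite !mxE big_ord1 !mxE.
rewrite linear_sum; apply: psd_sum => c.
by have := psd_choi_rank1 (adjmx (row c B)) CP; rewrite adjmxK.
Qed.

End Choi.

Section Projectors.
Variables (R : realType) (d : nat).
Local Notation C := R[i].

Lemma gram_1B_proj (H : 'M[C]_d) :
  adjmx H = H -> H *m H = H -> 1%:M - H = adjmx (1%:M - H) *m (1%:M - H).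
Proof.
move=> H_adj H_idem.
by rewrite adjmxB adjmx1 H_adj mulmxBl !mulmxBr !mul1mx mulmx1 H_idem subrr subr0.
Qed.

Lemma adjmx_pure_proj (v : 'cV[C]_d) : adjmx (pure_proj v) = pure_proj v.
Proof. by rewrite /pure_proj adjmxM adjmxK. Qed.

Lemma psd_pure_proj (v : 'cV[C]_d) : psd (pure_proj v).
Proof. by have := psd_gram (adjmx v); rewrite adjmxK. Qed.

Lemma mxtrace_mul_pure_proj (M : 'M[C]_d) (v : 'cV[C]_d) :
  \tr (M *m pure_proj v) = qform M v.
Proof. by rewrite /pure_proj mulmxA mxtrace_mulC mulmxA /mxtrace big_ord1. Qed.

Section UnitVector.
Variables (v : 'cV[C]_d) (v_unit : adjmx v *m v = 1%:M).

Lemma pure_proj_idem : pure_proj v *m pure_proj v = pure_proj v.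
Proof. by rewrite /pure_proj mulmxA -(mulmxA v) v_unit mulmx1. Qed.

Lemma mxtrace_pure_proj : \tr (pure_proj v) = 1.
Proof. by rewrite /pure_proj mxtrace_mulC v_unit mxtrace1. Qed.

Lemma qform1_unit : qform 1%:M v = 1.
Proof. by rewrite /qform mulmx1 v_unit mxE. Qed.

Lemma gram_1B_pure_proj :
  1%:M - pure_proj v = adjmx (1%:M - pure_proj v) *m (1%:M - pure_proj v).
Proof. exact/gram_1B_proj/pure_proj_idem/adjmx_pure_proj. Qed.

End UnitVector.

Variables (k : nat) (psi : 'I_k -> 'cV[C]_d).
Hypothesis psi_on : orthonormal_states psi.

Lemma orthonormal_statesE i j : adjmx (psi i) *m psi j = (i == j)%:R%:M.
Proof. by rewrite [LHS]mx11_scalar psi_on. Qed.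

Lemma orthonormal_states_unit j : adjmx (psi j) *m psi j = 1%:M.
Proof. by rewrite orthonormal_statesE eqxx. Qed.

Lemma sum_pure_proj_fix j :
  (\sum_i pure_proj (psi i)) *m pure_proj (psi j) = pure_proj (psi j).
Proof.
rewrite {1}/pure_proj mulmxA mulmx_suml (bigD1 j) //= big1 => [|i /negbTE ij].
  by rewrite -mulmxA orthonormal_statesE eqxx mul_mx_scalar scale1r addr0.
by rewrite -mulmxA orthonormal_statesE ij mul_mx_scalar scale0r.
Qed.

Lemma psd_1B_sum_pure_proj : psd (1%:M - \sum_i pure_proj (psi i)).
Proof.
rewrite gram_1B_proj; first exact: psd_gram.
  by rewrite adjmx_sum; apply: eq_bigr => i _; rewrite adjmx_pure_proj.
by rewrite mulmx_sumr; apply: eq_bigr => i _; rewrite sum_pure_proj_fix.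
Qed.

Lemma orthonormal_states_card : (k <= d)%N.
Proof.
have := psd_tr_ge0 psd_1B_sum_pure_proj.
rewrite (raddfB (@mxtrace _ d)) /= mxtrace1 (raddf_sum (@mxtrace _ d)) /=.
under eq_bigr => i _ do rewrite mxtrace_pure_proj ?orthonormal_states_unit //.
by rewrite sumr_const card_ord subr_ge0 ler_nat.
Qed.

End Projectors.

Section Robustness.
Variables (R : realType) (d : nat).
Local Notation C := R[i].

Lemma psd_mxtrace_real (A : 'M[C]_d) : psd A -> exists2 s : R, 0 <= s & \tr A = s%:C.
Proof.
move=> /psd_tr_ge0 trA_ge0; have /complex_realP[s trAE] := ger0_real trA_ge0.
by exists s => //; rewrite -ler0c -trAE.
Qed.

Lemma incoherent_normalize (D : 'M[C]_d) (t : R) :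
  psd D -> is_diag_mx D -> \tr D = t%:C -> 0 < t -> incoherent ((t^-1)%:C *: D).
Proof.
move=> D_psd D_diag trD t_gt0; split; last exact: is_diag_mxZ.
split; first by apply: psdZ => //; rewrite ler0c invr_ge0 ltW.
by rewrite mxtraceZ trD -rmorphM mulVf ?gt_eqF.
Qed.

(* The state [tau] of the definition is [G] normalized by its trace, or
   [sigma] itself when [\tr G = 0] (which forces [G = 0]). *)
Lemma robustness_le (sigma G : 'M[C]_d) :
  density sigma -> psd G -> is_diag_mx (sigma + G) -> (robustness sigma)%:C <= \tr G.
Proof.
move=> [sigma_psd tr_sigma] G_psd diag_sum.
have [s s_ge0 trG] := psd_mxtrace_real G_psd.
rewrite trG lecR; apply: ge_inf; first by exists 0 => x [].
split; first exact: s_ge0.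
have inc : incoherent (((1 + s)^-1)%:C *: (sigma + G)).
  apply: incoherent_normalize => //; last by rewrite ltr_pwDl.
    exact: psdD.
  by rewrite mxtraceD tr_sigma trG rmorphD.
have [s0|s_neq0] := eqVneq s 0.
  have G0 : G = 0 by apply: psd_tr_eq0; rewrite // trG s0.
  exists sigma; split; first by split.
  by move: inc; rewrite G0 s0 rmorph0 scale0r !addr0.
exists ((s^-1)%:C *: G); split.
  split; first by apply: psdZ => //; rewrite ler0c invr_ge0.
  by rewrite mxtraceZ trG -rmorphM mulVf.
by rewrite scalerA -rmorphM mulfV // scale1r.
Qed.

End Robustness.

Lemma convex_comb_eq1 (F : numDomainType) k (p t : 'I_k -> F) :
  (forall j, 0 <= p j) -> \sum_j p j = 1 -> (forall j, t j <= 1) ->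
  \sum_j p j * t j = 1 -> forall j, p j != 0 -> t j = 1.
Proof.
move=> p_ge0 p_sum1 t_le1 pt_sum1 j pj_neq0.
have terms_ge0 i : xpredT i -> 0 <= p i * (1 - t i) by rewrite mulr_ge0 ?subr_ge0.
have : \sum_i p i * (1 - t i) = 0.
  by under eq_bigr => i _ do rewrite mulrBr mulr1; rewrite sumrB p_sum1 pt_sum1 subrr.
move=> /(psumr_eq0P terms_ge0)/(_ j isT)/eqP.
by rewrite mulf_eq0 (negbTE pj_neq0) subr_eq0 eq_sym => /eqP.
Qed.

Section MIO.
Variables (R : realType) (k d : nat) (N : {linear 'M[R[i]]_d -> 'M[R[i]]_(k * d)}).
Hypothesis N_MIO : MIO N.

Lemma MIO_psd_gram p (B : 'M[R[i]]_(p, d)) : psd (N (adjmx B *m B)).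
Proof. by case: N_MIO => -[CP _] _; apply: psd_choi_gram. Qed.

Lemma MIO_mxtrace (A : 'M[R[i]]_d) : \tr (N A) = \tr A.
Proof. by case: N_MIO => -[_ TP] _; apply: TP. Qed.

Lemma MIO_diag1 : is_diag_mx (N 1%:M).
Proof.
have [d0|d_gt0] := posnP d.
  apply/is_diag_mxP => i; have : (i < k * 0)%N by rewrite -d0.
  by rewrite muln0.
have d_neq0 : d%:R != 0 :> R by rewrite pnatr_eq0 -lt0n.
have : incoherent ((d%:R^-1)%:C *: (1%:M : 'M[R[i]]_d)).
  apply: incoherent_normalize;
    [|exact: scalar_mx_is_diag|by rewrite mxtrace1 rmorph_nat|by rewrite ltr0n].
  by have := psd_gram (1%:M : 'M[R[i]]_d); rewrite adjmx1 mul1mx.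
case: N_MIO => _ /[apply] -[_]; rewrite linearZ /= => /(is_diag_mxZ (d%:R)%:C).
by rewrite scalerA -rmorphM mulfV // scale1r.
Qed.

Lemma MIO_robustness_le (v : 'cV[R[i]]_d) (j : 'I_k) :
  adjmx v *m v = 1%:M -> \tr (dblock (N (pure_proj v)) j) = 1 ->
  (robustness (ptrB (N (pure_proj v))))%:C <= \tr (dblock (N 1%:M) j) - 1.
Proof.
move=> v_unit trj; set rho := pure_proj v.
(* All of [N rho] lies in block [j], and completing it with the positive
   [N (1 - rho)] gives the diagonal block [j] of [N 1]. *)
have Nrho_psd : psd (N rho) by have := MIO_psd_gram (adjmx v); rewrite adjmxK.
have N1Brho_psd : psd (N (1%:M - rho)).
  by rewrite gram_1B_pure_proj //; apply: MIO_psd_gram.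
have off_blocks0 b : b != j -> dblock (N rho) b = 0.
  move=> bj; apply: psd_dblock_tr0 => //; move: b bj.
  apply/(psumr_eq0P (fun b _ => psd_tr_ge0 (psd_dblock b Nrho_psd))).
  have := MIO_mxtrace rho; rewrite mxtrace_pure_proj // mxtrace_dblock (bigD1 j) //= trj.
  by move=> /(canRL (addKr 1)); rewrite addNr.
have -> : ptrB (N rho) = dblock (N rho) j.
  by rewrite ptrB_dblock (bigD1 j) //= big1 ?addr0.
have -> : \tr (dblock (N 1%:M) j) - 1 = \tr (dblock (N (1%:M - rho)) j).
  by rewrite linearB /= dblockB (raddfB (@mxtrace _ d)) /= trj.
apply: robustness_le; first by split; [apply: psd_dblock | ].
  exact: psd_dblock.
by rewrite -dblockD -linearD /= addrC subrK; apply/is_diag_dblock/MIO_diag1.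
Qed.

End MIO.

Lemma sum_eq1_ord_gt0 (F : nzSemiRingType) k (p : 'I_k -> F) : \sum_i p i = 1 -> (0 < k)%N.
Proof. by case: k p => [|//] p; rewrite big_ord0 => /eqP; rewrite eq_sym oner_eq0. Qed.

Lemma sup_le_ge0_ub (R : realType) (E : set R) x : 0 <= x -> ubound E x -> sup E <= x.
Proof.
move=> x_ge0 E_ub; have [E_neq0|E_empty] := pselect (E !=set0)%classic; first exact: ge_sup.
suff -> : E = set0 by rewrite sup0.
by apply/seteqP; split => y // Ey; apply: E_empty; exists y.
Qed.

Lemma log2M (R : realType) (x y : R) : 0 < x -> 0 < y -> log2 (x * y) = log2 x + log2 y.
Proof. by move=> x_gt0 y_gt0; rewrite /log2 lnM ?posrE // mulrDl. Qed.

Lemma ler_log2 (R : realType) (x y : R) : 1 <= y -> x <= y -> log2 x <= log2 y.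
Proof.
move=> y_ge1 xy; have ln2_gt0 : 0 < ln (2 : R) by rewrite ln_gt0 ?ltr1n.
rewrite /log2 ler_pM2r ?invr_gt0 //; have [x_le0|x_gt0] := lerP x 0.
  by rewrite ln0 // ln_ge0.
by rewrite ler_ln ?posrE // (lt_le_trans ltr01).
Qed.

Lemma POVM_qform_le1 (R : realType) k d (M : 'I_k -> 'M[R[i]]_d) (v : 'cV[R[i]]_d) j :
  POVM M -> adjmx v *m v = 1%:M -> qform (M j) v <= 1.
Proof.
move=> [M_psd M_sum] v_unit; rewrite -(qform1_unit v_unit) -M_sum qform_sum (bigD1 j) //=.
by rewrite lerDl sumr_ge0 // => i _; apply: M_psd.
Qed.

Section Discrimination.
Variables (R : realType) (k d : nat) (p : 'I_k -> R) (psi : 'I_k -> 'cV[R[i]]_d).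
Hypotheses (p_ge0 : forall i, 0 <= p i) (p_sum1 : \sum_i p i = 1)
  (psi_on : orthonormal_states psi).
Local Notation rho j := (pure_proj (psi j)).
Local Notation pmax := (\big[Num.max/0]_(i < k) p i).

Lemma le_pmax j : p j <= pmax.
Proof. exact: le_bigmax. Qed.

Lemma pmax_ge0 : 0 <= pmax.
Proof. by apply: (big_ind (fun x => 0 <= x)) => // x y x_ge0 _; rewrite le_max x_ge0. Qed.

Lemma pmax_dim_ge1 : 1 <= pmax * d%:R.
Proof.
have : 1 <= pmax *+ k.
  rewrite -p_sum1 -[X in _ *+ X]card_ord -sumr_const.
  by apply: ler_sum => j _; apply: le_pmax.
move/le_trans; apply; rewrite -[_ *+ k]mulr_natr; apply: ler_wpM2l; first exact: pmax_ge0.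
by rewrite ler_nat (orthonormal_states_card psi_on).
Qed.

Lemma Psuc_orthonormal : Psuc p (fun j => rho j) = 1.
Proof.
have k_gt0 := sum_eq1_ord_gt0 p_sum1.
have rho_unit := orthonormal_states_unit psi_on.
rewrite /Psuc; set S := (X in sup X).
have S_ub : ubound S 1.
  move=> x [M [M_povm xE]]; rewrite -lecR xE -p_sum1 rmorph_sum; apply: ler_sum => j _.
  by rewrite mxtrace_mul_pure_proj ler_piMr ?ler0c // POVM_qform_le1.
(* Complete the projections onto the states to a POVM by spreading the
   orthogonal complement evenly. *)
have S1 : S 1.
  pose Q := 1%:M - \sum_i rho i.
  exists (fun j => rho j + (k%:R^-1 : R[i]) *: Q); split.
    split=> [j|].
      apply: psdD (psd_pure_proj _) (psdZ _ (psd_1B_sum_pure_proj psi_on)).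
      by rewrite invr_ge0.
    rewrite big_split /= sumr_const card_ord scalerMnl -mulr_natr mulVf ?pnatr_eq0 -?lt0n //.
    by rewrite scale1r /Q addrC subrK.
  rewrite -p_sum1 rmorph_sum; apply: eq_bigr => j _.
  have Q_rho : Q *m rho j = 0 by rewrite /Q mulmxBl mul1mx sum_pure_proj_fix // subrr.
  rewrite mulmxDl -scalemxAl Q_rho scaler0 addr0 pure_proj_idem //.
  by rewrite mxtrace_pure_proj // mulr1.
by apply/le_anti; rewrite ge_sup ?ub_le_sup //; exists 1.
Qed.

Lemma MIO_discrimination_le (N : {linear 'M[R[i]]_d -> 'M[R[i]]_(k * d)}) :
  MIO N -> \sum_j (p j)%:C * \tr (N (rho j) *m projB R d j) = 1 ->
  \sum_j p j * robustness (ptrB (N (rho j))) <= pmax * d%:R - 1.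
Proof.
move=> N_MIO succ; have rho_unit := orthonormal_states_unit psi_on.
have tr_block1 j : p j != 0 -> \tr (dblock (N (rho j)) j) = 1.
  pose t i := \tr (dblock (N (rho i)) i).
  move=> pj_neq0; apply: (@convex_comb_eq1 _ _ (fun i => (p i)%:C) t).
  - by move=> i; rewrite ler0c.
  - by rewrite -rmorph_sum p_sum1.
  - move=> i; have Nrho_psd := MIO_psd_gram N_MIO (adjmx (psi i)); rewrite adjmxK in Nrho_psd.
    rewrite -(mxtrace_pure_proj (rho_unit i)) -(MIO_mxtrace N_MIO) mxtrace_dblock (bigD1 i) //=.
    by rewrite lerDl sumr_ge0 // => b _; apply/psd_tr_ge0/psd_dblock.
  - by rewrite -succ; apply: eq_bigr => i _; rewrite mxtrace_mul_projB.
  - by rewrite fmorph_eq0.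
pose T j := \tr (dblock (N 1%:M) j).
have T_ge0 j : 0 <= T j.
  apply/psd_tr_ge0/psd_dblock.
  by have := MIO_psd_gram N_MIO (1%:M : 'M[R[i]]_d); rewrite adjmx1 mul1mx.
have T_sum : \sum_j T j = d%:R by rewrite -mxtrace_dblock MIO_mxtrace // mxtrace1.
rewrite -lecR rmorphB rmorphM rmorph1 rmorph_nat /= -T_sum mulr_sumr -[1]/(1%:C).
rewrite -p_sum1 !rmorph_sum -sumrB; apply: ler_sum => j _.
have [pj0|pj_neq0] := eqVneq (p j) 0.
  by rewrite pj0 mul0r rmorph0 subr0 mulr_ge0 // ler0c pmax_ge0.
rewrite rmorphM; apply: le_trans (_ : (p j)%:C * (T j - 1) <= _).
  by rewrite ler_wpM2l ?ler0c // MIO_robustness_le // tr_block1.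
by rewrite mulrBr mulr1 lerD2r ler_wpM2r // lecR le_pmax.
Qed.

Lemma eta_MIO_le : eta_MIO p (fun j => rho j) <= pmax * d%:R - 1.
Proof.
rewrite /eta_MIO Psuc_orthonormal; apply: sup_le_ge0_ub.
  by rewrite subr_ge0 pmax_dim_ge1.
by move=> x [N [N_MIO [succ ->]]]; apply: MIO_discrimination_le.
Qed.

End Discrimination.

Unset Implicit Arguments.
Local Close Scope complex_scope.

Theorem theoremS1 (R : realType) (d k : nat) (p : 'I_k -> R)
    (psi : 'I_k -> 'cV[R[i]]_d) :
  (forall i, 0 <= p i) -> \sum_(i < k) p i = 1 ->
  orthonormal_states psi ->
  C_MIO p (fun j => pure_proj (psi j)) + S_min p <= log2 d%:R.
Proof.
move=> p_ge0 p_sum1 psi_on.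
have pd_ge1 := pmax_dim_ge1 p_ge0 p_sum1 psi_on.
have eta_le := eta_MIO_le p_ge0 p_sum1 psi_on.
set pmax := \big[Num.max/0]_(i < k) p i in pd_ge1 eta_le *.
have pmax_gt0 : 0 < pmax.
  by rewrite lt_neqAle pmax_ge0 // andbT; apply: contraTneq pd_ge1 => <-; rewrite mul0r ler10.
have d_gt0 : 0 < d%:R :> R.
  by rewrite lt_neqAle ler0n andbT; apply: contraTneq pd_ge1 => <-; rewrite mulr0 ler10.
have : log2 (1 + eta_MIO p (fun j => pure_proj (psi j))) <= log2 pmax + log2 d%:R.
  by rewrite -log2M //; apply: ler_log2 => //; lra.
rewrite /C_MIO /S_min -/pmax; lra.
Qed.
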